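(* Let $A$ be a constant real $3\times3$ matrix, $\vec\mu_0\in\mathbb{R}^3$ constant, and $\vec\mu(\vec\gamma)=A\vec\gamma+\vec\mu_0$. Then $\Pi_{\vec\mu}$ defines a Poisson bracket on $\mathbb{R}^3\times(\mathbb{R}^3\setminus\{0\})$ if and only if $A$ is symmetric. In that case $C(\vec M,\vec\gamma)=\tfrac12\vec\gamma\cdot A\vec\gamma+(\vec M+\vec\mu_0)\cdot\vec\gamma$ is a Casimir function of $\Pi_{\vec\mu}$.
   Context: Coordinates on $\mathbb{R}^6$ are $(\vec M,\vec\gamma)=(M_1,M_2,M_3,\gamma_1,\gamma_2,\gamma_3)$. For a smooth $\vec\mu=(\mu_1,\mu_2,\mu_3)$ of $(\vec M,\vec\gamma)$, $\Pi_{\vec\mu}$ is the skew-symmetric $6\times6$ matrix $$\Pi_{\vec\mu}=\begin{bmatrix}0&-M_3-\mu_3&M_2+\mu_2&0&-\gamma_3&\gamma_2\\ M_3+\mu_3&0&-M_1-\mu_1&\gamma_3&0&-\gamma_1\\ -M_2-\mu_2&M_1+\mu_1&0&-\gamma_2&\gamma_1&0\\ 0&-\gamma_3&\gamma_2&0&0&0\\ \gamma_3&0&-\gamma_1&0&0&0\\ -\gamma_2&\gamma_1&0&0&0&0\end{bmatrix},$$ it ''defines a Poisson bracket'' if $\{f,g\}_{\vec\mu}=(\nabla f)^T\Pi_{\vec\mu}\nabla g$ satisfies the Jacobi identity, and a Casimir function is a smooth $C$ with $\Pi_{\vec\mu}\nabla C=0$. *)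

From Stdlib Require Import Reals ClassicalEpsilon List.
Open Scope R_scope.

(* A point (M1,M2,M3,gamma1,gamma2,gamma3) of R^6; coordinates indexed 0..5. *)
Record pt := mkpt { p0 : R; p1 : R; p2 : R; p3 : R; p4 : R; p5 : R }.

Definition coord (x : pt) (i : nat) : R :=
  match i with
  | 0 => p0 x | 1 => p1 x | 2 => p2 x | 3 => p3 x | 4 => p4 x | _ => p5 x
  end.

Definition upd (x : pt) (i : nat) (t : R) : pt :=
  match i with
  | 0 => mkpt t (p1 x) (p2 x) (p3 x) (p4 x) (p5 x)
  | 1 => mkpt (p0 x) t (p2 x) (p3 x) (p4 x) (p5 x)
  | 2 => mkpt (p0 x) (p1 x) t (p3 x) (p4 x) (p5 x)
  | 3 => mkpt (p0 x) (p1 x) (p2 x) t (p4 x) (p5 x)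
  | 4 => mkpt (p0 x) (p1 x) (p2 x) (p3 x) t (p5 x)
  | _ => mkpt (p0 x) (p1 x) (p2 x) (p3 x) (p4 x) t
  end.

Definition U (x : pt) : Prop := ~ (p3 x = 0 /\ p4 x = 0 /\ p5 x = 0).

Definition has_partial (f : pt -> R) (i : nat) (x : pt) (l : R) : Prop :=
  derivable_pt_lim (fun t => f (upd x i t)) (coord x i) l.

(* the i-th partial derivative (its value is meaningful where it exists) *)
Definition partial (i : nat) (f : pt -> R) (x : pt) : R :=
  epsilon (inhabits 0) (fun l => has_partial f i x l).

Fixpoint iter_partial (l : list nat) (f : pt -> R) : pt -> R :=
  match l with
  | nil => f
  | i :: l' => partial i (iter_partial l' f)
  end.

Definition continuous_at6 (f : pt -> R) (x : pt) : Prop :=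
  forall eps, 0 < eps -> exists delta, 0 < delta /\
    forall y, (forall i, (i < 6)%nat -> Rabs (coord y i - coord x i) < delta) ->
      Rabs (f y - f x) < eps.

Definition smooth (f : pt -> R) : Prop :=
  forall l : list nat, (forall i, In i l -> (i < 6)%nat) ->
  forall x, U x ->
    continuous_at6 (iter_partial l f) x /\
    (forall i, (i < 6)%nat -> exists d, has_partial (iter_partial l f) i x d).

(* The matrix Pi_mu at x; mu x k is mu_{k+1} (k = 0,1,2). *)
Definition Pi (mu : pt -> nat -> R) (x : pt) (i j : nat) : R :=
  let M1 := p0 x in let M2 := p1 x in let M3 := p2 x in
  let g1 := p3 x in let g2 := p4 x in let g3 := p5 x in
  let m1 := mu x 0%nat in let m2 := mu x 1%nat in let m3 := mu x 2%nat in
  match i, j with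
  | 0, 1 => - (M3 + m3) | 0, 2 => M2 + m2 | 0, 4 => - g3 | 0, 5 => g2
  | 1, 0 => M3 + m3 | 1, 2 => - (M1 + m1) | 1, 3 => g3 | 1, 5 => - g1
  | 2, 0 => - (M2 + m2) | 2, 1 => M1 + m1 | 2, 3 => - g2 | 2, 4 => g1
  | 3, 1 => - g3 | 3, 2 => g2
  | 4, 0 => g3 | 4, 2 => - g1
  | 5, 0 => - g2 | 5, 1 => g1
  | _, _ => 0
  end.

Definition bracket (mu : pt -> nat -> R) (f g : pt -> R) (x : pt) : R :=
  sum_f_R0 (fun i => sum_f_R0 (fun j =>
    partial i f x * Pi mu x i j * partial j g x) 5) 5.

Definition is_Poisson (mu : pt -> nat -> R) : Prop :=
  forall f g h : pt -> R, smooth f -> smooth g -> smooth h ->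
  forall x, U x ->
    bracket mu f (bracket mu g h) x + bracket mu g (bracket mu h f) x
    + bracket mu h (bracket mu f g) x = 0.

Definition Casimir (mu : pt -> nat -> R) (C : pt -> R) : Prop :=
  smooth C /\
  forall x, U x -> forall i, (i < 6)%nat ->
    sum_f_R0 (fun j => Pi mu x i j * partial j C x) 5 = 0.

(* gamma_{k+1} for k = 0,1,2 and M_{k+1} likewise *)
Definition gam (x : pt) (k : nat) : R := coord x (3 + k).
Definition Mc (x : pt) (k : nat) : R := coord x k.

(* mu(gamma) = A gamma + mu0; A k j is the (k+1,j+1) entry *)
Definition mu_lin (A : nat -> nat -> R) (mu0 : nat -> R) (x : pt) (k : nat) : R :=
  A k 0%nat * gam x 0 + A k 1%nat * gam x 1 + A k 2%nat * gam x 2 + mu0 k.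

Definition Cas (A : nat -> nat -> R) (mu0 : nat -> R) (x : pt) : R :=
  / 2 * sum_f_R0 (fun k => gam x k * sum_f_R0 (fun j => A k j * gam x j) 2) 2
  + sum_f_R0 (fun k => (Mc x k + mu0 k) * gam x k) 2.

(* Since mu is affine, Pi_mu is affine in x.  Differentiating the inner bracket
   in {f,{g,h}} therefore produces second derivatives of g and h, and constant
   derivatives of Pi_mu.  In the cyclic sum the second-derivative terms cancel
   pairwise by the symmetry of mixed partials, and the remaining terms form a
   polynomial identity in the gradients of f, g, h that holds when A is
   symmetric.  Conversely, the Jacobiator of the coordinate functions M1, M2, M3
   equals -(gamma1 (A32 - A23) + gamma2 (A13 - A31) + gamma3 (A21 - A12)), which
   vanishes on gamma != 0 only if A is symmetric. *)

From Stdlib Require Import Reals Lra Lia ClassicalEpsilon FunctionalExtensionality List.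
Open Scope R_scope.

Lemma coord_upd x j t i :
  coord (upd x j t) i = if Nat.eqb (Nat.min i 5) (Nat.min j 5) then t else coord x i.
Proof. destruct i as [|[|[|[|[|[|i]]]]]]; destruct j as [|[|[|[|[|[|j]]]]]]; reflexivity. Qed.

Lemma upd_upd x i a b : upd (upd x i a) i b = upd x i b.
Proof. destruct i as [|[|[|[|[|[|i]]]]]]; reflexivity. Qed.

Lemma upd_comm x i j a b : (i < 6)%nat -> (j < 6)%nat -> i <> j ->
  upd (upd x i a) j b = upd (upd x j b) i a.
Proof.
  intros Hi Hj Hij.
  destruct i as [|[|[|[|[|[|i]]]]]]; try lia; destruct j as [|[|[|[|[|[|j]]]]]]; try lia;
    reflexivity.
Qed.

Lemma upd_coord x i : upd x i (coord x i) = x.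
Proof. destruct x; destruct i as [|[|[|[|[|[|i]]]]]]; reflexivity. Qed.

Lemma partial_of_has_partial f i x l : has_partial f i x l -> partial i f x = l.
Proof.
  intro H. unfold partial.
  apply (uniqueness_limite (fun t => f (upd x i t)) (coord x i)); [|exact H].
  apply (epsilon_spec (inhabits 0) (fun l => has_partial f i x l)). exists l; exact H.
Qed.

Lemma derivable_pt_lim_eq f c l l' : derivable_pt_lim f c l' -> l' = l -> derivable_pt_lim f c l.
Proof. now intros H ->. Qed.

Lemma derivable_pt_lim_sum_f_R0 (F : nat -> R -> R) (F' : nat -> R) t0 n :
  (forall i, (i <= n)%nat -> derivable_pt_lim (F i) t0 (F' i)) ->
  derivable_pt_lim (fun t => sum_f_R0 (fun i => F i t) n) t0 (sum_f_R0 F' n).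
Proof.
  induction n as [|n IH]; intro H; simpl.
  - apply H; lia.
  - apply (derivable_pt_lim_plus (fun t => sum_f_R0 (fun i => F i t) n) (F (S n))).
    + apply IH. intros; apply H; lia.
    + apply H; lia.
Qed.

Definition close (x : pt) (d : R) (y : pt) : Prop :=
  forall i, (i < 6)%nat -> Rabs (coord y i - coord x i) < d.

Definition near6 (x : pt) (P : pt -> Prop) : Prop :=
  exists d, 0 < d /\ forall y, close x d y -> P y.

Lemma near6_and x P Q : near6 x P -> near6 x Q -> near6 x (fun y => P y /\ Q y).
Proof.
  intros [d1 [Hd1 H1]] [d2 [Hd2 H2]]. exists (Rmin d1 d2). split; [now apply Rmin_pos|].
  intros y Hy. pose proof (Rmin_l d1 d2). pose proof (Rmin_r d1 d2).
  split; [apply H1|apply H2]; intros i Hi; specialize (Hy i Hi); lra.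
Qed.

Lemma near6_mono x (P Q : pt -> Prop) : (forall y, P y -> Q y) -> near6 x P -> near6 x Q.
Proof. intros HPQ [d [Hd H]]. exists d. split; auto. Qed.

Lemma U_near6 x : U x -> near6 x U.
Proof.
  intro Hx. exists ((Rabs (p3 x) + Rabs (p4 x) + Rabs (p5 x)) / 3). split.
  - pose proof (Rabs_pos (p3 x)). pose proof (Rabs_pos (p4 x)). pose proof (Rabs_pos (p5 x)).
    destruct (Req_dec (p3 x) 0) as [E3|E3]; [|pose proof (Rabs_pos_lt _ E3); lra].
    destruct (Req_dec (p4 x) 0) as [E4|E4]; [|pose proof (Rabs_pos_lt _ E4); lra].
    destruct (Req_dec (p5 x) 0) as [E5|E5]; [|pose proof (Rabs_pos_lt _ E5); lra].
    exfalso; apply Hx; auto.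
  - intros y Hy [E3 [E4 E5]].
    pose proof (Hy 3%nat ltac:(lia)) as B3. pose proof (Hy 4%nat ltac:(lia)) as B4.
    pose proof (Hy 5%nat ltac:(lia)) as B5. simpl in B3, B4, B5.
    rewrite E3, Rminus_0_l, Rabs_Ropp in B3. rewrite E4, Rminus_0_l, Rabs_Ropp in B4.
    rewrite E5, Rminus_0_l, Rabs_Ropp in B5. lra.
Qed.

Lemma continuous_at6_const c x : continuous_at6 (fun _ => c) x.
Proof. intros e He. exists 1. split; [lra|]. intros. rewrite Rminus_diag, Rabs_R0. lra. Qed.

Lemma continuous_at6_coord i x : continuous_at6 (fun y => coord y i) x.
Proof.
  intros e He. exists e. split; [lra|]. intros y Hy.
  destruct (Nat.lt_ge_cases i 6) as [Hi|Hi]; [now apply Hy|].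
  replace i with (5 + (i - 5))%nat by lia.
  destruct (i - 5)%nat; apply (Hy 5%nat); lia.
Qed.

Lemma continuous_at6_plus f g x : continuous_at6 f x -> continuous_at6 g x ->
  continuous_at6 (fun y => f y + g y) x.
Proof.
  intros Hf Hg e He.
  refine (near6_mono x _ _ _ (near6_and x _ _ (Hf (e/2) _) (Hg (e/2) _))); [|lra|lra].
  intros y [H1 H2].
  replace (f y + g y - (f x + g x)) with ((f y - f x) + (g y - g x)) by ring.
  pose proof (Rabs_triang (f y - f x) (g y - g x)). lra.
Qed.

Lemma continuous_at6_mult f g x : continuous_at6 f x -> continuous_at6 g x ->
  continuous_at6 (fun y => f y * g y) x.
Proof.
  intros Hf Hg e He.
  set (K := Rabs (f x) + Rabs (g x) + 1).
  assert (HK : 0 < K) by (unfold K; pose proof (Rabs_pos (f x)); pose proof (Rabs_pos (g x)); lra).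
  set (eta := Rmin 1 (e / K)).
  assert (Heta : 0 < eta) by (apply Rmin_pos; [lra|apply Rdiv_lt_0_compat; lra]).
  assert (HetaK : eta * K <= e).
  { apply (Rle_trans _ (e / K * K)); [apply Rmult_le_compat_r; [lra|apply Rmin_r]|].
    right; field; lra. }
  refine (near6_mono x _ _ _ (near6_and x _ _ (Hf eta Heta) (Hg eta Heta))).
  intros y [H1 H2].
  replace (f y * g y - f x * g x)
    with ((f y - f x) * (g y - g x) + f x * (g y - g x) + g x * (f y - f x)) by ring.
  pose proof (Rabs_triang ((f y - f x) * (g y - g x) + f x * (g y - g x)) (g x * (f y - f x))).
  pose proof (Rabs_triang ((f y - f x) * (g y - g x)) (f x * (g y - g x))).
  rewrite !Rabs_mult in *.
  pose proof (Rabs_pos (f y - f x)). pose proof (Rabs_pos (g y - g x)).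
  pose proof (Rabs_pos (f x)). pose proof (Rabs_pos (g x)). 
  assert (eta <= 1) by apply Rmin_l.
  assert (Hab : Rabs (f y - f x) * Rabs (g y - g x) <= Rabs (f y - f x))
    by (rewrite <- (Rmult_1_r (Rabs (f y - f x))) at 2; apply Rmult_le_compat_l; lra).
  assert (Hb : Rabs (f x) * Rabs (g y - g x) <= Rabs (f x) * eta)
    by (apply Rmult_le_compat_l; lra).
  assert (Ha : Rabs (g x) * Rabs (f y - f x) <= Rabs (g x) * eta)
    by (apply Rmult_le_compat_l; lra).
  unfold K in HetaK. lra.
Qed.

(* Evaluations of polynomial expressions are smooth; this covers the coordinate
   functions and the Casimir. *)
Inductive pexpr := PConst (c : R) | PVar (i : nat) | PAdd (a b : pexpr) | PMul (a b : pexpr).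

Fixpoint peval (e : pexpr) (x : pt) : R :=
  match e with
  | PConst c => c
  | PVar i => coord x i
  | PAdd a b => peval a x + peval b x
  | PMul a b => peval a x * peval b x
  end.

Fixpoint pderiv (j : nat) (e : pexpr) : pexpr :=
  match e with
  | PConst _ => PConst 0
  | PVar i => PConst (if Nat.eqb (Nat.min i 5) (Nat.min j 5) then 1 else 0)
  | PAdd a b => PAdd (pderiv j a) (pderiv j b)
  | PMul a b => PAdd (PMul (pderiv j a) b) (PMul a (pderiv j b))
  end.

Lemma has_partial_peval e j x : has_partial (peval e) j x (peval (pderiv j e) x).
Proof.
  unfold has_partial. induction e as [c|i|a IHa b IHb|a IHa b IHb]; simpl.
  - apply derivable_pt_lim_const.
  - apply (derivable_pt_lim_ext
      (fun t => if Nat.eqb (Nat.min i 5) (Nat.min j 5) then t else coord x i)).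
    { intro t. now rewrite coord_upd. }
    destruct (Nat.eqb (Nat.min i 5) (Nat.min j 5)).
    + apply derivable_pt_lim_id.
    + apply derivable_pt_lim_const.
  - apply (derivable_pt_lim_plus (fun t => peval a (upd x j t)) (fun t => peval b (upd x j t))); assumption.
  - eapply derivable_pt_lim_eq.
    + apply (derivable_pt_lim_mult (fun t => peval a (upd x j t)) (fun t => peval b (upd x j t))); eassumption.
    + rewrite upd_coord. ring.
Qed.

Lemma partial_peval i e : partial i (peval e) = peval (pderiv i e).
Proof. apply functional_extensionality. intro x. apply partial_of_has_partial, has_partial_peval. Qed.

Lemma continuous_at6_peval e x : continuous_at6 (peval e) x.
Proof.
  induction e; simpl.
  - apply continuous_at6_const.
  - apply continuous_at6_coord.
  - now apply continuous_at6_plus.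
  - now apply continuous_at6_mult.
Qed.

Lemma smooth_peval e : smooth (peval e).
Proof.
  intros l _ x _.
  assert (Hl : exists e', iter_partial l (peval e) = peval e').
  { induction l as [|i l [e' IH]]; [now exists e|].
    exists (pderiv i e'). simpl. now rewrite IH, partial_peval. }
  destruct Hl as [e' ->]. split; [apply continuous_at6_peval|].
  intros i _. eexists. apply has_partial_peval.
Qed.

Lemma smooth_has_partial f l i y :
  smooth f -> (forall j, In j l -> (j < 6)%nat) -> U y -> (i < 6)%nat ->
  has_partial (iter_partial l f) i y (partial i (iter_partial l f) y).
Proof.
  intros Hs Hl Hy Hi. destruct (proj2 (Hs l Hl y Hy) i Hi) as [d Hd].
  now rewrite (partial_of_has_partial _ _ _ _ Hd).
Qed.

Definition slice (x : pt) (k l : nat) (s t : R) : pt := upd (upd x k s) l t.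

Definition mixed_difference (f : pt -> R) (x : pt) (k l : nat) (h : R) : R :=
  let a := coord x k in let b := coord x l in
  f (slice x k l (a + h) (b + h)) - f (slice x k l (a + h) b)
  - f (slice x k l a (b + h)) + f (slice x k l a b).

Section Slice.
Variables (x : pt) (k l : nat).
Hypotheses (Hk : (k < 6)%nat) (Hl : (l < 6)%nat) (Hkl : k <> l).

Lemma coord_slice s t i : (i < 6)%nat ->
  coord (slice x k l s t) i = if Nat.eqb i l then t else if Nat.eqb i k then s else coord x i.
Proof.
  intro Hi. unfold slice. rewrite !coord_upd.
  replace (Nat.min i 5) with i by lia. replace (Nat.min k 5) with k by lia.
  now replace (Nat.min l 5) with l by lia.
Qed.

Lemma close_slice s t d : 0 < d -> Rabs (s - coord x k) < d -> Rabs (t - coord x l) < d ->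
  close x d (slice x k l s t).
Proof.
  intros Hd Hs Ht i Hi. rewrite coord_slice by exact Hi.
  destruct (Nat.eqb_spec i l) as [->|]; [exact Ht|].
  destruct (Nat.eqb_spec i k) as [->|]; [exact Hs|].
  now rewrite Rminus_diag, Rabs_R0.
Qed.

Lemma slice_swap s t : slice x l k t s = slice x k l s t.
Proof. unfold slice. now rewrite upd_comm by auto. Qed.

Lemma derivable_slice_l g s t d :
  has_partial g l (slice x k l s t) d -> derivable_pt_lim (fun u => g (slice x k l s u)) t d.
Proof.
  unfold has_partial. rewrite coord_slice, Nat.eqb_refl by exact Hl.
  apply derivable_pt_lim_ext. intro u. unfold slice. now rewrite upd_upd.
Qed.
End Slice.

Lemma derivable_slice_k x k l g s t d : (k < 6)%nat -> (l < 6)%nat -> k <> l ->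
  has_partial g k (slice x k l s t) d -> derivable_pt_lim (fun u => g (slice x k l u t)) s d.
Proof.
  intros Hk Hl Hkl. rewrite <- slice_swap by auto. intro H.
  apply (derivable_pt_lim_ext (fun u => g (slice x l k t u))).
  - intro u. now rewrite slice_swap.
  - now apply derivable_slice_l.
Qed.

Lemma mixed_difference_swap f x k l h : (k < 6)%nat -> (l < 6)%nat -> k <> l ->
  mixed_difference f x l k h = mixed_difference f x k l h.
Proof.
  intros Hk Hl Hkl. unfold mixed_difference.
  rewrite !(slice_swap x k l) by auto. ring.
Qed.

(* Mean value theorem applied first in the k-th and then in the l-th variable. *)
Lemma mixed_difference_mvt f x k l h : (k < 6)%nat -> (l < 6)%nat -> k <> l ->
  smooth f -> 0 < h ->
  (forall s t, coord x k <= s <= coord x k + h -> coord x l <= t <= coord x l + h ->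
     U (slice x k l s t)) ->
  exists s t, coord x k <= s <= coord x k + h /\ coord x l <= t <= coord x l + h /\
    mixed_difference f x k l h = h * h * partial l (partial k f) (slice x k l s t).
Proof.
  intros Hk Hl Hkl Hf Hh HU. set (a := coord x k) in *. set (b := coord x l) in *.
  assert (Lnil : forall i, In i nil -> (i < 6)%nat) by (intros i []).
  assert (Lk : forall i, In i (k :: nil) -> (i < 6)%nat) by (intros i [<-|[]]; auto).
  destruct (MVT_cor2 (fun s => f (slice x k l s (b + h)) - f (slice x k l s b))
     (fun s => partial k f (slice x k l s (b + h)) - partial k f (slice x k l s b)) a (a + h))
    as [s [Es Hs]]; [lra| |].
  { intros c Hc. apply derivable_pt_lim_minus; apply derivable_slice_k; auto;
      apply (smooth_has_partial f nil); auto; apply HU; lra. }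
  destruct (MVT_cor2 (fun t => partial k f (slice x k l s t))
     (fun t => partial l (partial k f) (slice x k l s t)) b (b + h)) as [t [Et Ht]]; [lra| |].
  { intros c Hc. apply derivable_slice_l; auto.
    apply (smooth_has_partial f (k :: nil)); auto; apply HU; lra. }
  exists s, t. split; [lra|]. split; [lra|].
  unfold mixed_difference. fold a b.
  replace (a + h - a) with h in Es by ring. replace (b + h - b) with h in Et by ring.
  cbv beta in Es, Et. rewrite Et in Es.
  transitivity (partial l (partial k f) (slice x k l s t) * h * h); [lra|ring].
Qed.

Lemma continuous_at6_agree g1 g2 x : continuous_at6 g1 x -> continuous_at6 g2 x ->
  (forall d, 0 < d -> exists y1 y2, close x d y1 /\ close x d y2 /\ g1 y1 = g2 y2) ->
  g1 x = g2 x.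
Proof.
  intros C1 C2 H.
  destruct (Req_dec (g1 x) (g2 x)) as [E|NE]; [exact E|exfalso].
  set (e := Rabs (g1 x - g2 x) / 2).
  assert (He : 0 < e) by (unfold e; pose proof (Rabs_pos_lt (g1 x - g2 x)); lra).
  destruct (C1 e He) as [d1 [Hd1 E1]]. destruct (C2 e He) as [d2 [Hd2 E2]].
  destruct (H (Rmin d1 d2) (Rmin_pos _ _ Hd1 Hd2)) as [y1 [y2 [N1 [N2 Ey]]]].
  assert (B1 : Rabs (g1 y1 - g1 x) < e).
  { apply E1. intros i Hi. specialize (N1 i Hi). pose proof (Rmin_l d1 d2). lra. }
  assert (B2 : Rabs (g2 y2 - g2 x) < e).
  { apply E2. intros i Hi. specialize (N2 i Hi). pose proof (Rmin_r d1 d2). lra. }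
  rewrite Ey in B1.
  pose proof (Rabs_triang (g2 y2 - g2 x) (- (g2 y2 - g1 x))). rewrite Rabs_Ropp in H0.
  replace (g2 y2 - g2 x + - (g2 y2 - g1 x)) with (g1 x - g2 x) in H0 by ring.
  unfold e in *. lra.
Qed.

Lemma partial_comm f x i j : smooth f -> U x -> (i < 6)%nat -> (j < 6)%nat ->
  partial i (partial j f) x = partial j (partial i f) x.
Proof.
  intros Hf Hx Hi Hj. destruct (Nat.eq_dec i j) as [->|Hij]; [reflexivity|].
  apply continuous_at6_agree.
  { apply (Hf (i :: j :: nil)); [intros m [<-|[<-|[]]]; auto|exact Hx]. }
  { apply (Hf (j :: i :: nil)); [intros m [<-|[<-|[]]]; auto|exact Hx]. }
  intros d Hd. destruct (U_near6 x Hx) as [r [Hr HUr]].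
  set (h := Rmin r d / 2).
  assert (Hh : 0 < h) by (unfold h; pose proof (Rmin_pos r d Hr Hd); lra).
  assert (Hclose : forall s t, coord x j <= s <= coord x j + h -> coord x i <= t <= coord x i + h ->
    close x r (slice x j i s t) /\ close x d (slice x j i s t)).
  { intros s t Hs Ht. pose proof (Rmin_l r d). pose proof (Rmin_r r d).
    split; apply close_slice; auto; apply Rabs_def1; unfold h in *; lra. }
  destruct (mixed_difference_mvt f x j i h) as [s [t [Hs [Ht E1]]]]; auto.
  { intros s t Hs Ht. now apply HUr, Hclose. }
  destruct (mixed_difference_mvt f x i j h) as [t' [s' [Ht' [Hs' E2]]]]; auto.
  { intros t' s' Ht' Hs'. rewrite slice_swap by auto. now apply HUr, Hclose. }
  exists (slice x j i s t), (slice x j i s' t'). split; [now apply Hclose|].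
  split; [now apply Hclose|].
  rewrite mixed_difference_swap, (slice_swap x j i) in E2 by auto.
  apply (Rmult_eq_reg_l (h * h)); [|apply Rgt_not_eq, Rmult_lt_0_compat; lra].
  now rewrite <- E1, <- E2.
Qed.

Definition origin : pt := mkpt 0 0 0 0 0 0.

(* Pi_mu is affine in x, so this difference is the constant partial derivative d_j Pi_ik. *)
Definition dPi (A : nat -> nat -> R) (mu0 : nat -> R) (j i k : nat) : R :=
  Pi (mu_lin A mu0) (upd origin j 1) i k - Pi (mu_lin A mu0) origin i k.

Lemma Pi_upd A mu0 x j t i k : (j < 6)%nat ->
  Pi (mu_lin A mu0) (upd x j t) i k = Pi (mu_lin A mu0) x i k + (t - coord x j) * dPi A mu0 j i k.
Proof.
  intro Hj. destruct x.
  destruct j as [|[|[|[|[|[|j]]]]]]; try lia;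
  destruct i as [|[|[|[|[|[|i]]]]]]; destruct k as [|[|[|[|[|[|k]]]]]];
  unfold dPi, Pi, mu_lin, gam; simpl; ring.
Qed.

Lemma has_partial_Pi A mu0 x j i k : (j < 6)%nat ->
  has_partial (fun y => Pi (mu_lin A mu0) y i k) j x (dPi A mu0 j i k).
Proof.
  intro Hj. unfold has_partial.
  apply (derivable_pt_lim_ext (fun t => Pi (mu_lin A mu0) x i k + (t - coord x j) * dPi A mu0 j i k)).
  { intro t. now rewrite Pi_upd. }
  apply (derivable_pt_lim_eq _ _ _ (0 + ((1 - 0) * dPi A mu0 j i k + (coord x j - coord x j) * 0)));
    [|ring].
  apply (derivable_pt_lim_plus (fct_cte (Pi (mu_lin A mu0) x i k))
    (fun t => (t - coord x j) * dPi A mu0 j i k)); [apply derivable_pt_lim_const|].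
  apply (derivable_pt_lim_mult (fun t => t - coord x j) (fct_cte (dPi A mu0 j i k)));
    [|apply derivable_pt_lim_const].
  apply (derivable_pt_lim_minus id (fct_cte (coord x j)));
    [apply derivable_pt_lim_id|apply derivable_pt_lim_const].
Qed.

Section Jacobi.
Variables (A : nat -> nat -> R) (mu0 : nat -> R).
Local Notation mu := (mu_lin A mu0).

Definition dbracket (g h : pt -> R) (j : nat) (x : pt) : R :=
  sum_f_R0 (fun i => sum_f_R0 (fun k =>
    partial j (partial i g) x * Pi mu x i k * partial k h x
    + partial i g x * dPi A mu0 j i k * partial k h x
    + partial i g x * Pi mu x i k * partial j (partial k h) x) 5) 5.

Lemma has_partial_bracket g h x j : smooth g -> smooth h -> U x -> (j < 6)%nat ->
  has_partial (bracket mu g h) j x (dbracket g h j x).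
Proof.
  intros Hg Hh Hx Hj. unfold has_partial, bracket, dbracket.
  apply (derivable_pt_lim_sum_f_R0 (fun i t => sum_f_R0 (fun k =>
     partial i g (upd x j t) * Pi mu (upd x j t) i k * partial k h (upd x j t)) 5)).
  intros i Hi.
  apply (derivable_pt_lim_sum_f_R0 (fun k t =>
     partial i g (upd x j t) * Pi mu (upd x j t) i k * partial k h (upd x j t))).
  intros k Hk.
  eapply derivable_pt_lim_eq.
  - apply (derivable_pt_lim_mult (fun t => partial i g (upd x j t) * Pi mu (upd x j t) i k)
      (fun t => partial k h (upd x j t))).
    + apply (derivable_pt_lim_mult (fun t => partial i g (upd x j t))
        (fun t => Pi mu (upd x j t) i k)).
      * apply (smooth_has_partial g (i :: nil)); auto. intros m [<-|[]]; lia.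
      * now apply has_partial_Pi.
    + apply (smooth_has_partial h (k :: nil)); auto. intros m [<-|[]]; lia.
  - rewrite upd_coord. cbn [iter_partial]. ring.
Qed.

Definition covector (f : pt -> R) (x : pt) (j : nat) : R :=
  sum_f_R0 (fun i => partial i f x * Pi mu x i j) 5.

Definition hessian_form (g : pt -> R) (j : nat) (x : pt) (w : nat -> R) : R :=
  sum_f_R0 (fun k => partial j (partial k g) x * w k) 5.

Definition dPi_form (g h : pt -> R) (j : nat) (x : pt) : R :=
  sum_f_R0 (fun k => sum_f_R0 (fun l => partial k g x * dPi A mu0 j k l * partial l h x) 5) 5.

Lemma dbracket_split g h j x : dbracket g h j x =
  - hessian_form g j x (covector h x) + hessian_form h j x (covector g x) + dPi_form g h j x.
Proof.
  unfold dbracket, hessian_form, covector, dPi_form. cbv beta iota fix delta [sum_f_R0].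
  unfold Pi. ring.
Qed.

Lemma bracket_bracket f g h x : smooth g -> smooth h -> U x ->
  bracket mu f (bracket mu g h) x = sum_f_R0 (fun j => covector f x j * dbracket g h j x) 5.
Proof.
  intros Hg Hh Hx. unfold bracket at 1.
  transitivity (sum_f_R0 (fun i => sum_f_R0 (fun j =>
    partial i f x * Pi mu x i j * dbracket g h j x) 5) 5).
  { apply sum_eq; intros i _; apply sum_eq; intros j Hj.
    now rewrite (partial_of_has_partial _ _ _ _ (has_partial_bracket g h x j Hg Hh Hx ltac:(lia))). }
  unfold covector. cbv beta iota fix delta [sum_f_R0]. ring.
Qed.

Lemma jacobi_hessian_terms_cancel f g h x : smooth f -> smooth g -> smooth h -> U x ->
  sum_f_R0 (fun j => covector f x j *
    (- hessian_form g j x (covector h x) + hessian_form h j x (covector g x))) 5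
  + sum_f_R0 (fun j => covector g x j *
    (- hessian_form h j x (covector f x) + hessian_form f j x (covector h x))) 5
  + sum_f_R0 (fun j => covector h x j *
    (- hessian_form f j x (covector g x) + hessian_form g j x (covector f x))) 5 = 0.
Proof.
  intros Hf Hg Hh Hx.
  unfold hessian_form. cbv beta iota fix delta [sum_f_R0].
  (* Orient every mixed partial as d_i d_j with i < j; the terms then cancel pairwise. *)
  repeat match goal with
  | |- context [partial ?i (partial ?j ?F) x] =>
      lazymatch eval compute in (Nat.ltb j i) with
      | true => rewrite (partial_comm F x i j) by (auto; lia)
      end
  end.
  ring.
Qed.

Hypothesis HA : forall i j, (i < 3)%nat -> (j < 3)%nat -> A i j = A j i.

Lemma jacobi_dPi_terms_vanish f g h x :
  sum_f_R0 (fun j => covector f x j * dPi_form g h j x) 5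
  + sum_f_R0 (fun j => covector g x j * dPi_form h f j x) 5
  + sum_f_R0 (fun j => covector h x j * dPi_form f g j x) 5 = 0.
Proof.
  unfold covector, dPi_form, dPi, Pi, mu_lin, gam, origin.
  cbn [sum_f_R0 coord upd p0 p1 p2 p3 p4 p5 Nat.add].
  rewrite (HA 1 0), (HA 2 0), (HA 2 1) by lia.
  ring.
Qed.

Lemma is_Poisson_mu_lin : is_Poisson mu.
Proof.
  intros f g h Hf Hg Hh x Hx.
  rewrite (bracket_bracket f g h x Hg Hh Hx), (bracket_bracket g h f x Hh Hf Hx),
    (bracket_bracket h f g x Hf Hg Hx).
  pose proof (jacobi_hessian_terms_cancel f g h x Hf Hg Hh Hx).
  pose proof (jacobi_dPi_terms_vanish f g h x).
  cbn [sum_f_R0] in *. rewrite !dbracket_split. lra.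
Qed.
End Jacobi.

Lemma bracket_coord_l mu a F x : (a < 6)%nat ->
  bracket mu (peval (PVar a)) F x = sum_f_R0 (fun j => Pi mu x a j * partial j F x) 5.
Proof.
  intro Ha. unfold bracket. cbn [sum_f_R0]. rewrite !partial_peval.
  destruct a as [|[|[|[|[|[|a]]]]]]; try lia; cbn [peval pderiv Nat.min Nat.eqb]; ring.
Qed.

Lemma bracket_coord_coord mu a b : (a < 6)%nat -> (b < 6)%nat ->
  bracket mu (peval (PVar a)) (peval (PVar b)) = fun y => Pi mu y a b.
Proof.
  intros Ha Hb. apply functional_extensionality; intro y.
  rewrite bracket_coord_l by exact Ha. cbn [sum_f_R0]. rewrite !partial_peval.
  destruct b as [|[|[|[|[|[|b]]]]]]; try lia; cbn [peval pderiv Nat.min Nat.eqb]; ring.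
Qed.

Lemma partial_Pi A mu0 x j i k : (j < 6)%nat ->
  partial j (fun y => Pi (mu_lin A mu0) y i k) x = dPi A mu0 j i k.
Proof. intro Hj. now apply partial_of_has_partial, has_partial_Pi. Qed.

Lemma jacobiator_M A mu0 x :
  let M i := peval (PVar i) in let br := bracket (mu_lin A mu0) in
  br (M 0%nat) (br (M 1%nat) (M 2%nat)) x + br (M 1%nat) (br (M 2%nat) (M 0%nat)) x
  + br (M 2%nat) (br (M 0%nat) (M 1%nat)) x
  = - (gam x 0 * (A 2%nat 1%nat - A 1%nat 2%nat) + gam x 1 * (A 0%nat 2%nat - A 2%nat 0%nat)
       + gam x 2 * (A 1%nat 0%nat - A 0%nat 1%nat)).
Proof.
  cbv beta zeta. rewrite !bracket_coord_coord, !bracket_coord_l by lia. cbn [sum_f_R0].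
  rewrite !partial_Pi by lia.
  unfold dPi, Pi, mu_lin, gam, origin. cbn [coord upd p0 p1 p2 p3 p4 p5 Nat.add]. ring.
Qed.

Lemma symmetric_of_is_Poisson A mu0 : is_Poisson (mu_lin A mu0) ->
  forall i j, (i < 3)%nat -> (j < 3)%nat -> A i j = A j i.
Proof.
  intro HP.
  assert (J : forall x, U x -> gam x 0 * (A 2%nat 1%nat - A 1%nat 2%nat)
    + gam x 1 * (A 0%nat 2%nat - A 2%nat 0%nat) + gam x 2 * (A 1%nat 0%nat - A 0%nat 1%nat) = 0).
  { intros x Hx. pose proof (jacobiator_M A mu0 x) as E. cbv beta zeta in E.
    rewrite (HP _ _ _ (smooth_peval _) (smooth_peval _) (smooth_peval _) x Hx) in E. lra. }
  assert (J3 := J (upd origin 3 1)). assert (J4 := J (upd origin 4 1)).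
  assert (J5 := J (upd origin 5 1)).
  unfold U, gam in J3, J4, J5. cbn in J3, J4, J5.
  specialize (J3 ltac:(lra)). specialize (J4 ltac:(lra)). specialize (J5 ltac:(lra)).
  intros i j Hi Hj.
  destruct i as [|[|[|i]]]; try lia; destruct j as [|[|[|j]]]; try lia; lra.
Qed.

Definition psum3 (F : nat -> pexpr) : pexpr := PAdd (PAdd (F 0%nat) (F 1%nat)) (F 2%nat).

Definition Cas_pexpr (A : nat -> nat -> R) (mu0 : nat -> R) : pexpr :=
  PAdd (PMul (PConst (/ 2))
          (psum3 (fun k => PMul (PVar (3 + k)) (psum3 (fun j => PMul (PConst (A k j)) (PVar (3 + j)))))))
       (psum3 (fun k => PMul (PAdd (PVar k) (PConst (mu0 k))) (PVar (3 + k)))).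

Lemma Cas_peval A mu0 : Cas A mu0 = peval (Cas_pexpr A mu0).
Proof.
  apply functional_extensionality; intro x.
  unfold Cas, Cas_pexpr, psum3, gam, Mc. cbn [sum_f_R0 peval Nat.add]. ring.
Qed.

Lemma Casimir_Cas A mu0 : (forall i j, (i < 3)%nat -> (j < 3)%nat -> A i j = A j i) ->
  Casimir (mu_lin A mu0) (Cas A mu0).
Proof.
  intro HA.
  assert (S10 := HA 1%nat 0%nat ltac:(lia) ltac:(lia)).
  assert (S20 := HA 2%nat 0%nat ltac:(lia) ltac:(lia)).
  assert (S21 := HA 2%nat 1%nat ltac:(lia) ltac:(lia)).
  rewrite Cas_peval. split; [apply smooth_peval|].
  intros x Hx i Hi. cbn [sum_f_R0]. rewrite !partial_peval.
  unfold Cas_pexpr, psum3, Pi, mu_lin, gam.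
  destruct i as [|[|[|[|[|[|i]]]]]]; try lia;
    cbn [coord peval pderiv Nat.add Nat.min Nat.eqb]; rewrite ?S10, ?S20, ?S21; field.
Qed.

Theorem mainTheorem7 (A : nat -> nat -> R) (mu0 : nat -> R) :
  (is_Poisson (mu_lin A mu0) <->
     (forall i j, (i < 3)%nat -> (j < 3)%nat -> A i j = A j i)) /\
  ((forall i j, (i < 3)%nat -> (j < 3)%nat -> A i j = A j i) ->
     Casimir (mu_lin A mu0) (Cas A mu0)).
Proof.
  split; [split|].
  - apply symmetric_of_is_Poisson.
  - apply is_Poisson_mu_lin.
  - apply Casimir_Cas.
Qed.
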